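(* Let $n\geq 1$ and let $D_i$ ($i<n$) be digraphs on vertex sets $V_i$ (finite or infinite) such that there is a single set $R$ with $V_i\cap V_j=R$ for all $i<j<n$, and for all $i<j<n$ there is a digraph isomorphism $\psi_{i,j}:V_i\to V_j$ from $D_i$ to $D_j$ which is the identity on $R$. Then $D=\bigcup\{D_i:i<n\}$ (vertex set $\bigcup V_i$, arc set $\bigcup E(D_i)$) is a digraph. Fix $k\geq 3$ and assume each $D_i$ has digirth bigger than $k$. Then: (1) for $i<j<n$ and $\alpha\in V_i\setminus R$, every directed path in $D$ from $\alpha$ to $\psi_{i,j}(\alpha)$ has length $>k$; (2) $D$ has digirth bigger than $k$; (3) if moreover $n>k$ and $\alpha_i\in V_i\setminus R$ ($i<n$) satisfy $\alpha_j=\psi_{i,j}(\alpha_i)$ for $i<j<n$, then the digraph $D^*$ with $V(D^* )=V(D)$ and $E(D^* )=E(D)\cup\{\alpha_{n-1}\alpha_0\}\cup\{\alpha_i\alpha_{i+1}:i<n-1\}$ has digirth bigger than $k$.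
   Context: A digraph is a pair $D=(V,E)$ with $E\subseteq V^2$ such that $uv\in E$ implies $vu\notin E$. The digirth is the length of the shortest directed cycle; the length of a path is its number of arcs. *)

From Stdlib Require Import List Arith Lia.
Import ListNotations.

Section Digraphs.
Variable T : Type.

Definition is_digraph (V : T -> Prop) (E : T -> T -> Prop) : Prop :=
  (forall u v, E u v -> V u /\ V v) /\ (forall u v, E u v -> ~ E v u).

Fixpoint chain (E : T -> T -> Prop) (x : T) (l : list T) : Prop :=
  match l with
  | [] => True
  | y :: l' => E x y /\ chain E y l'
  end.

Definition dpath (E : T -> T -> Prop) (a b : T) (m : nat) : Prop :=
  exists l : list T, length l = m /\ NoDup (a :: l) /\ chain E a l
                     /\ last (a :: l) a = b.

Definition dcycle (E : T -> T -> Prop) (m : nat) : Prop :=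
  exists (a : T) (l : list T), length l + 1 = m /\ NoDup (a :: l)
                     /\ chain E a l /\ E (last l a) a.

Definition digirth_gt (E : T -> T -> Prop) (k : nat) : Prop :=
  forall m, dcycle E m -> k < m.

Definition dg_iso (V1 : T -> Prop) (E1 : T -> T -> Prop)
                  (V2 : T -> Prop) (E2 : T -> T -> Prop) (psi : T -> T) : Prop :=
  (forall x, V1 x -> V2 (psi x)) /\
  (forall x y, V1 x -> V1 y -> psi x = psi y -> x = y) /\
  (forall y, V2 y -> exists x, V1 x /\ psi x = y) /\
  (forall x y, V1 x -> V1 y -> (E1 x y <-> E2 (psi x) (psi y))).

Definition unionV (n : nat) (V : nat -> T -> Prop) : T -> Prop :=
  fun x => exists i, i < n /\ V i x.
Definition unionE (n : nat) (E : nat -> T -> T -> Prop) : T -> T -> Prop :=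
  fun u v => exists i, i < n /\ E i u v.

Definition starE (n : nat) (E : nat -> T -> T -> Prop) (alpha : nat -> T)
  : T -> T -> Prop :=
  fun u v => unionE n E u v
          \/ (u = alpha (n - 1) /\ v = alpha 0)
          \/ (exists i, i + 1 < n /\ u = alpha i /\ v = alpha (i + 1)).
End Digraphs.

Arguments is_digraph {T}.
Arguments chain {T}.
Arguments dpath {T}.
Arguments dcycle {T}.
Arguments digirth_gt {T}.
Arguments dg_iso {T}.
Arguments unionV {T}.
Arguments unionE {T}.
Arguments starE {T}.

(* Gluing the maps psi_{j,i}, and inverses of psi_{i,j}, along the common part R
   gives a digraph homomorphism pi_i from D onto D_i that fixes V_i and sends
   psi_{i,j}(a) back to a. A cycle of D, or a path from a to psi_{i,j}(a), is thus
   mapped to a closed walk of D_i of the same length, which contains a cycle of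
   D_i, of length > k. In D^* the new arcs join vertices that pi_0 identifies
   with alpha_0, so pi_0 contracts a short cycle of D^* to a nonempty closed walk
   of D_0, unless the cycle uses only new arcs; those wind around the n-cycle
   alpha_0 ... alpha_{n-1}, and n > k. *)

From Stdlib Require Import List Arith Lia ListDec Permutation ClassicalEpsilon.
Import ListNotations.

Section ClosedWalks.
Context {T : Type}.
Implicit Types (E : T -> T -> Prop) (x y : T) (l : list T).

Definition dg_hom (E E' : T -> T -> Prop) (f : T -> T) : Prop :=
  forall u v, E u v -> E' (f u) (f v).

Definition closed_walk E x l : Prop := l <> [] /\ chain E x l /\ last l x = x.

Lemma last_cons x y l : last (y :: l) x = last l y.
Proof.
  revert x y; induction l as [|z l IH]; intros x y; [reflexivity|].
  change (last (z :: l) x = last (z :: l) y). now rewrite !IH.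
Qed.

Lemma chain_app E x l1 l2 :
  chain E x (l1 ++ l2) <-> chain E x l1 /\ chain E (last l1 x) l2.
Proof.
  revert x; induction l1 as [|y l1 IH]; intros x; cbn [chain app]; [tauto|].
  rewrite IH, last_cons. tauto.
Qed.

Lemma chain_map E E' f x l :
  dg_hom E E' f -> chain E x l ->
  chain E' (f x) (map f l) /\ last (map f l) (f x) = f (last l x).
Proof.
  intros Hf; revert x; induction l as [|y l IH]; intros x Hc; [easy|].
  destruct Hc as [Hxy Hc].
  destruct (IH y Hc) as [Hc' Hl]. simpl map. rewrite !last_cons.
  split; [split; [apply Hf|]|]; assumption.
Qed.

Lemma closed_walk_map E E' f x l :
  dg_hom E E' f -> closed_walk E x l -> closed_walk E' (f x) (map f l).
Proof.
  intros Hf [Hne [Hc Hl]]. destruct (chain_map _ _ _ _ _ Hf Hc) as [Hc' Hl'].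
  repeat split; [now destruct l | exact Hc' | now rewrite Hl', Hl].
Qed.

Lemma dcycle_closed_walk E m :
  dcycle E m -> exists x l, length l = m /\ closed_walk E x l.
Proof.
  intros [a [l [Hm [_ [Hc Ha]]]]]. exists a, (l ++ [a]).
  rewrite length_app. repeat split; [simpl; lia | now destruct l | |apply last_last].
  apply chain_app. simpl. tauto.
Qed.

(* A closed walk without repeated vertices is a cycle; otherwise the stretch
   between two visits of a repeated vertex is a shorter closed walk. *)
Lemma closed_walk_dcycle E x l :
  closed_walk E x l -> exists m, 1 <= m <= length l /\ dcycle E m.
Proof.
  remember (length l) as N eqn:HN. revert x l HN.
  induction N as [N IH] using lt_wf_ind. intros x l -> [Hne [Hc Hl]].
  destruct (classic (NoDup l)) as [Hnd | Hdup].
  - rewrite (app_removelast_last x Hne), Hl in Hc, Hnd |- *.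
    apply chain_app in Hc as [Hc0 [Hlast _]].
    exists (length (removelast l) + 1). rewrite length_app. split; [simpl; lia|].
    exists x, (removelast l). split; [reflexivity|split; [|split; assumption]].
    exact (Permutation_NoDup (Permutation_sym (Permutation_cons_append _ x)) Hnd).
  - apply not_NoDup in Hdup as [y [p [q [r ->]]]]; [|intros a b; apply classic].
    apply chain_app in Hc as [_ [_ Hc]].
    replace (q ++ y :: r) with ((q ++ [y]) ++ r) in Hc by now rewrite <- app_assoc.
    apply chain_app in Hc as [Hq _].
    assert (Hlen : length (q ++ [y]) < length (p ++ y :: q ++ y :: r)).
    { rewrite !length_app. simpl. rewrite length_app. simpl. lia. }
    destruct (IH _ Hlen y (q ++ [y]) eq_refl) as [m [Hm Hcyc]].
    { repeat split; [now destruct q | exact Hq | apply last_last]. }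
    exists m. split; [lia | exact Hcyc].
Qed.

Lemma digirth_gt_closed_walk E k x l :
  digirth_gt E k -> closed_walk E x l -> k < length l.
Proof.
  intros Hg Hw. destruct (closed_walk_dcycle _ _ _ Hw) as [m [Hm Hcyc]].
  specialize (Hg m Hcyc). lia.
Qed.

Lemma chain_contract (A B C : T -> T -> Prop) f :
  dg_hom A C f -> (forall u v, B u v -> f u = f v) ->
  forall l x, chain (fun u v => A u v \/ B u v) x l ->
  exists l', chain C (f x) l' /\ last l' (f x) = f (last l x) /\
    length l' <= length l /\ (l' = [] -> chain B x l).
Proof.
  intros HA HB l; induction l as [|y l IH]; intros x Hc.
  - exists []. simpl. auto.
  - destruct Hc as [[Hxy | Hxy] Hc]; destruct (IH y Hc) as [l' [H1 [H2 [H3 H4]]]].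
    + exists (f y :: l'). rewrite !last_cons. simpl.
      split; [auto|split; [exact H2|split; [lia|discriminate]]].
    + exists l'. rewrite (HB _ _ Hxy), last_cons. simpl.
      split; [exact H1|split; [exact H2|split; [lia|auto]]].
Qed.

Lemma closed_walk_contract (A B C : T -> T -> Prop) f x l :
  dg_hom A C f -> (forall u v, B u v -> f u = f v) ->
  closed_walk (fun u v => A u v \/ B u v) x l ->
  (exists l', length l' <= length l /\ closed_walk C (f x) l') \/ closed_walk B x l.
Proof.
  intros HA HB [Hne [Hc Hl]].
  destruct (chain_contract A B C f HA HB l x Hc) as [l' [Hc' [Hl' [Hlen Hnil]]]].
  destruct l' as [|z l'].
  - right. repeat split; auto.
  - left. exists (z :: l'). rewrite Hl in Hl'. split; [exact Hlen|]. split; [discriminate|auto].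
Qed.

Definition cycle_arc (n : nat) (alpha : nat -> T) (u v : T) : Prop :=
  (u = alpha (n - 1) /\ v = alpha 0) \/
  (exists i, i + 1 < n /\ u = alpha i /\ v = alpha (i + 1)).

Section CycleArcs.
Variables (n : nat) (alpha : nat -> T).
Hypothesis alpha_inj : forall i j, i < n -> j < n -> alpha i = alpha j -> i = j.

Lemma cycle_arc_chain_index l i :
  i < n -> chain (cycle_arc n alpha) (alpha i) l ->
  exists j w, j < n /\ last l (alpha i) = alpha j /\ j + n * w = i + length l.
Proof.
  revert i; induction l as [|y l IH]; intros i Hi Hc.
  - exists i, 0. simpl. repeat split; auto; lia.
  - destruct Hc as [[[Hu ->] | [i' [Hi' [Hu ->]]]] Hc]; rewrite last_cons.
    + assert (i = n - 1) by (apply alpha_inj; auto; lia). subst i.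
      destruct (IH 0 ltac:(lia) Hc) as [j [w [Hj [Hl Heq]]]].
      exists j, (S w). simpl length. repeat split; auto. nia.
    + assert (i = i') by (apply alpha_inj; auto; lia). subst i'.
      destruct (IH (i + 1) Hi' Hc) as [j [w [Hj [Hl Heq]]]].
      exists j, w. simpl length. repeat split; auto. lia.
Qed.

Lemma cycle_arc_closed_walk_long x l :
  closed_walk (cycle_arc n alpha) x l -> n <= length l.
Proof.
  intros [Hne [Hc Hl]].
  destruct (Nat.eq_dec n 0) as [-> | Hn]; [lia|].
  assert (Hx : exists i, i < n /\ x = alpha i).
  { destruct l as [|y l0]; [congruence|].
    destruct (proj1 Hc) as [[Hx _] | [i [Hi [Hx _]]]];
      eexists; (split; [|exact Hx]); lia. }
  destruct Hx as [i [Hi ->]].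
  destruct (cycle_arc_chain_index l i Hi Hc) as [j [w [Hj [Hlast Heq]]]].
  rewrite Hl in Hlast. apply alpha_inj in Hlast; [subst j | lia | lia].
  assert (length l <> 0) by (destruct l; simpl; congruence).
  destruct w; nia.
Qed.

End CycleArcs.
End ClosedWalks.

Section Maps.
Context {T : Type}.

Lemma dg_iso_hom (V1 V2 : T -> Prop) (E1 E2 : T -> T -> Prop) f :
  dg_iso V1 E1 V2 E2 f -> (forall u v, E1 u v -> V1 u /\ V1 v) -> dg_hom E1 E2 f.
Proof.
  intros [_ [_ [_ Harc]]] HE1 u v Huv. destruct (HE1 u v Huv).
  apply Harc; assumption.
Qed.

Lemma dg_iso_inverse (V1 V2 : T -> Prop) (E1 E2 : T -> T -> Prop) f :
  dg_iso V1 E1 V2 E2 f -> (forall u v, E2 u v -> V2 u /\ V2 v) ->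
  exists g, dg_hom E2 E1 g /\ (forall x, V1 x -> g (f x) = x).
Proof.
  intros [Hmaps [Hinj [Honto Harc]]] HE2.
  destruct (choice (fun y x => V2 y -> V1 x /\ f x = y)) as [g Hg].
  { intros y. destruct (classic (V2 y)) as [Hy | Hy].
    - destruct (Honto y Hy) as [x Hx]. exists x. auto.
    - exists y. tauto. }
  exists g. split.
  - intros u v Huv. destruct (HE2 u v Huv) as [Hu Hv].
    destruct (Hg u Hu) as [Hgu Hfu], (Hg v Hv) as [Hgv Hfv].
    apply Harc; [assumption | assumption |]. now rewrite Hfu, Hfv.
  - intros x Hx. destruct (Hg (f x) (Hmaps x Hx)) as [Hgx Hfx]. auto.
Qed.

Lemma glue_maps (n : nat) (V : nat -> T -> Prop) (g : nat -> T -> T) :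
  (forall j j' x, j < n -> j' < n -> V j x -> V j' x -> g j x = g j' x) ->
  exists pi, forall j x, j < n -> V j x -> pi x = g j x.
Proof.
  intros Hagree.
  destruct (choice (fun x y => forall j, j < n -> V j x -> y = g j x)) as [pi Hpi].
  { intros x. destruct (classic (exists j, j < n /\ V j x)) as [[j0 [Hj0 Hx0]] | Hno].
    - exists (g j0 x). intros j Hj Hx. apply Hagree; assumption.
    - exists x. intros j Hj Hx. exfalso. eauto. }
  exists pi. intros j x. apply Hpi.
Qed.

End Maps.

Section Amalgam.
Variables (T : Type) (n : nat) (V : nat -> T -> Prop) (E : nat -> T -> T -> Prop)
  (R : T -> Prop) (psi : nat -> nat -> T -> T).
Hypothesis D_digraph : forall i, i < n -> is_digraph (V i) (E i).
Hypothesis V_overlap : forall i j, i < j -> j < n -> forall x, (V i x /\ V j x) <-> R x.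
Hypothesis psi_iso : forall i j, i < j -> j < n ->
  dg_iso (V i) (E i) (V j) (E j) (psi i j) /\ (forall x, R x -> psi i j x = x).

Lemma arc_vertices i u v : i < n -> E i u v -> V i u /\ V i v.
Proof. intros Hi. apply (proj1 (D_digraph i Hi)). Qed.

Lemma overlap_iff i j x : i < n -> j < n -> i <> j -> (V i x /\ V j x <-> R x).
Proof.
  intros Hi Hj Hij. destruct (Nat.lt_total i j) as [Hlt | [Heq | Hgt]]; [| easy |].
  - now apply V_overlap.
  - rewrite and_comm. now apply V_overlap.
Qed.

Lemma arc_transfer i j u v : i < n -> j < n -> R u -> R v -> E i u v -> E j u v.
Proof.
  intros Hi Hj Hu Hv Huv.
  destruct (Nat.lt_total i j) as [Hlt | [<- | Hgt]]; [| exact Huv |].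
  - destruct (psi_iso i j Hlt Hj) as [Hiso Hfix].
    rewrite <- (Hfix u Hu), <- (Hfix v Hv). exact (dg_iso_hom _ _ _ _ _ Hiso
      (fun u v => arc_vertices i u v Hi) u v Huv).
  - destruct (psi_iso j i Hgt Hi) as [[_ [_ [_ Harc]]] Hfix].
    assert (Hvu : V j u /\ V j v) by
      (split; apply (overlap_iff j i); auto; lia).
    apply (Harc u v (proj1 Hvu) (proj2 Hvu)). now rewrite (Hfix u Hu), (Hfix v Hv).
Qed.

Lemma union_is_digraph : is_digraph (unionV n V) (unionE n E).
Proof.
  split.
  - intros u v [i [Hi Huv]]. destruct (arc_vertices i u v Hi Huv).
    split; exists i; auto.
  - intros u v [i [Hi Huv]] [j [Hj Hvu]].
    destruct (Nat.eq_dec i j) as [<- | Hij].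
    + exact (proj2 (D_digraph i Hi) u v Huv Hvu).
    + destruct (arc_vertices i u v Hi Huv), (arc_vertices j v u Hj Hvu).
      assert (R u /\ R v) as [Ru Rv] by (split; apply (overlap_iff i j); auto).
      exact (proj2 (D_digraph j Hj) u v (arc_transfer i j u v Hi Hj Ru Rv Huv) Hvu).
Qed.

Lemma local_retraction i j : i < n -> j < n ->
  exists g, dg_hom (E j) (E i) g /\ (forall x, V i x -> V j x -> g x = x) /\
    (i < j -> forall x, V i x -> g (psi i j x) = x).
Proof.
  intros Hi Hj. destruct (Nat.lt_total i j) as [Hlt | [<- | Hgt]].
  - destruct (psi_iso i j Hlt Hj) as [Hiso Hfix].
    destruct (dg_iso_inverse _ _ _ _ _ Hiso (fun u v => arc_vertices j u v Hj))
      as [g [Hg Hret]].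
    exists g. split; [exact Hg|]. split; [|auto].
    intros x Hxi Hxj. rewrite <- (Hfix x) at 1; [now apply Hret|].
    now apply (V_overlap i j).
  - exists (fun x => x). split; [intros u v Huv; exact Huv|]. split; [auto|lia].
  - destruct (psi_iso j i Hgt Hi) as [Hiso Hfix].
    exists (psi j i). split; [exact (dg_iso_hom _ _ _ _ _ Hiso
      (fun u v => arc_vertices j u v Hj))|]. split; [|lia].
    intros x Hxi Hxj. apply Hfix. now apply (V_overlap j i).
Qed.

Lemma retraction i : i < n ->
  exists pi, dg_hom (unionE n E) (E i) pi /\ (forall x, V i x -> pi x = x) /\
    (forall j x, i < j -> j < n -> V i x -> pi (psi i j x) = x).
Proof.
  intros Hi.
  destruct (choice (fun j g => j < n -> dg_hom (E j) (E i) g /\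
      (forall x, V i x -> V j x -> g x = x) /\
      (i < j -> forall x, V i x -> g (psi i j x) = x))) as [G HG].
  { intros j. destruct (Nat.lt_ge_cases j n) as [Hj | Hj].
    - destruct (local_retraction i j Hi Hj) as [g Hg]. exists g. auto.
    - exists (fun x => x). lia. }
  assert (HGR : forall j x, j < n -> V j x -> R x -> G j x = x).
  { intros j x Hj Hxj Hx. apply (HG j Hj); [|exact Hxj].
    destruct (Nat.eq_dec i j) as [<- | Hij]; [exact Hxj|].
    now apply (overlap_iff i j x Hi Hj Hij). }
  destruct (glue_maps n V G) as [pi Hpi].
  { intros j j' x Hj Hj' Hxj Hxj'.
    destruct (Nat.eq_dec j j') as [<- | Hjj']; [reflexivity|].
    assert (Hx : R x) by now apply (overlap_iff j j').
    now rewrite (HGR j x), (HGR j' x). }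
  exists pi. split; [|split].
  - intros u v [j [Hj Huv]]. destruct (arc_vertices j u v Hj Huv).
    rewrite (Hpi j u), (Hpi j v) by assumption. now apply (HG j Hj).
  - intros x Hx. rewrite (Hpi i x Hi Hx). now apply (HG i Hi).
  - intros j x Hij Hj Hx.
    destruct (psi_iso i j Hij Hj) as [[Hmaps _] _].
    rewrite (Hpi j) by auto. now apply (HG j Hj).
Qed.

Lemma alpha_injective (alpha : nat -> T) :
  (forall i, i < n -> V i (alpha i) /\ ~ R (alpha i)) ->
  forall i j, i < n -> j < n -> alpha i = alpha j -> i = j.
Proof.
  intros Halpha i j Hi Hj Heq. destruct (Nat.eq_dec i j) as [| Hij]; [assumption|].
  exfalso. apply (proj2 (Halpha i Hi)), (overlap_iff i j _ Hi Hj Hij).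
  split; [apply Halpha | rewrite Heq; apply Halpha]; assumption.
Qed.

Variable k : nat.
Hypothesis D_digirth : forall i, i < n -> digirth_gt (E i) k.

Lemma psi_path_long i j a m : i < j -> j < n -> V i a -> ~ R a ->
  dpath (unionE n E) a (psi i j a) m -> k < m.
Proof.
  intros Hij Hj Ha HRa [l [Hm [_ [Hc Hlast]]]]. rewrite last_cons in Hlast.
  destruct (retraction i ltac:(lia)) as [pi [Hpi [Hfix Hret]]].
  destruct (chain_map _ _ _ _ _ Hpi Hc) as [Hc' Hl'].
  assert (Hne : l <> []).
  { intros ->. apply HRa, (V_overlap i j Hij Hj). split; [exact Ha|].
    cbn in Hlast. rewrite Hlast. now apply (psi_iso i j Hij Hj). }
  rewrite <- Hm, <- (length_map pi).
  apply (digirth_gt_closed_walk _ _ (pi a) _ (D_digirth i ltac:(lia))).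
  split; [now destruct l|]. split; [exact Hc'|].
  now rewrite Hl', Hlast, Hret, Hfix.
Qed.

Lemma union_digirth_gt : 1 <= n -> digirth_gt (unionE n E) k.
Proof.
  intros Hn m Hcyc. destruct (dcycle_closed_walk _ _ Hcyc) as [x [l [<- Hw]]].
  destruct (retraction 0 ltac:(lia)) as [pi [Hpi _]].
  rewrite <- (length_map pi).
  exact (digirth_gt_closed_walk _ _ _ _ (D_digirth 0 ltac:(lia))
    (closed_walk_map _ _ _ _ _ Hpi Hw)).
Qed.

Lemma star_digirth_gt (alpha : nat -> T) : k < n ->
  (forall i, i < n -> V i (alpha i) /\ ~ R (alpha i)) ->
  (forall i j, i < j -> j < n -> alpha j = psi i j (alpha i)) ->
  digirth_gt (starE n E alpha) k.
Proof.
  intros Hkn Halpha Hpsi m Hcyc.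
  destruct (dcycle_closed_walk _ _ Hcyc) as [x [l [<- Hw]]].
  destruct (retraction 0 ltac:(lia)) as [pi [Hpi [Hfix Hret]]].
  assert (Hpa : forall t, t < n -> pi (alpha t) = alpha 0).
  { intros [|t] Ht; [apply Hfix, Halpha; lia|].
    rewrite (Hpsi 0 (S t)) by lia. apply Hret; [lia | lia | apply Halpha; lia]. }
  assert (Hcollapse : forall u v, cycle_arc n alpha u v -> pi u = pi v).
  { intros u v [[-> ->] | [i [Hi [-> ->]]]]; rewrite !Hpa; auto; lia. }
  destruct (closed_walk_contract _ _ _ _ x l Hpi Hcollapse Hw)
    as [[l' [Hlen Hw']] | Hw'].
  - specialize (digirth_gt_closed_walk _ _ _ _ (D_digirth 0 ltac:(lia)) Hw'). lia.
  - specialize (cycle_arc_closed_walk_long _ _ (alpha_injective alpha Halpha) _ _ Hw').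
    lia.
Qed.

End Amalgam.

Theorem lemma2p1 (T : Type) (n : nat) (V : nat -> T -> Prop)
  (E : nat -> T -> T -> Prop) (R : T -> Prop) (psi : nat -> nat -> T -> T)
  (k : nat) :
  1 <= n ->
  (forall i, i < n -> is_digraph (V i) (E i)) ->
  (forall i j, i < j -> j < n -> forall x, (V i x /\ V j x) <-> R x) ->
  (forall i j, i < j -> j < n ->
     dg_iso (V i) (E i) (V j) (E j) (psi i j) /\
     (forall x, R x -> psi i j x = x)) ->
  3 <= k ->
  (forall i, i < n -> digirth_gt (E i) k) ->
  is_digraph (unionV n V) (unionE n E) /\
  (forall i j, i < j -> j < n -> forall a, V i a -> ~ R a ->
     forall m, dpath (unionE n E) a (psi i j a) m -> k < m) /\
  digirth_gt (unionE n E) k /\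
  (k < n -> forall alpha : nat -> T,
     (forall i, i < n -> V i (alpha i) /\ ~ R (alpha i)) ->
     (forall i j, i < j -> j < n -> alpha j = psi i j (alpha i)) ->
     digirth_gt (starE n E alpha) k).
Proof.
  intros Hn HD HR Hiso _ Hgirth.
  split; [exact (union_is_digraph T n V E R psi HD HR Hiso)|].
  split; [intros i j Hij Hj a Ha HRa m;
          exact (psi_path_long T n V E R psi HD HR Hiso k Hgirth i j a m Hij Hj Ha HRa)|].
  split; [exact (union_digirth_gt T n V E R psi HD HR Hiso k Hgirth Hn)|].
  intros Hkn alpha. exact (star_digirth_gt T n V E R psi HD HR Hiso k Hgirth alpha Hkn).
Qed.
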